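(* Let $L$ be an interval locale with top element $1$, and for a presheaf $F$ on $L$ and $x\in L\setminus\{1\}$ set $F_x=\varinjlim_{x<s}F(s)$. Then: (1) the associated sheaf map $\eta:F\to L^2F$ induces bijections $F_x\to(L^2F)_x$ for all $x\in L\setminus\{1\}$; (2) a map $E\to F$ of presheaves on $L$ induces bijections $E_x\to F_x$ for all $x\in L\setminus\{1\}$ if and only if the induced map $L^2E\to L^2F$ of associated sheaves is an isomorphism.
   Context: A locale $L$ is a complete lattice in which finite meets distribute over arbitrary joins, with Grothendieck topology: $\{b_j\le a\}$ covers $a$ iff $\bigvee_j b_j=a$; presheaves are functors $L^{op}\to\mathbf{Set}$, sheaves are presheaves $F$ with $F(a)\to\varprojlim_{b\in R}F(b)$ bijective for all covering sieves $R$ of $a$. $L$ is an interval if it is totally ordered and densely ordered ($a<b$ implies some $s$ with $a<s<b$). $L^2$ denotes the associated sheaf functor from presheaves to sheaves on $L$ and $\eta:F\to L^2F$ the canonical map. *)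

From Stdlib Require Import Relation_Operators.

Unset Implicit Arguments.


Record Locale := {
  lcar :> Type;
  le : lcar -> lcar -> Prop;
  le_refl : forall a, le a a;
  le_trans : forall a b c, le a b -> le b c -> le a c;
  le_antisym : forall a b, le a b -> le b a -> a = b;
  sup : (lcar -> Prop) -> lcar;
  sup_ub : forall (S : lcar -> Prop) s, S s -> le s (sup S);
  sup_least : forall (S : lcar -> Prop) u, (forall s, S s -> le s u) -> le (sup S) u;
  meet : lcar -> lcar -> lcar;
  meet_l : forall a b, le (meet a b) a;
  meet_r : forall a b, le (meet a b) b;
  meet_glb : forall a b c, le c a -> le c b -> le c (meet a b);
  meet_sup_distr : forall a (S : lcar -> Prop),
    meet a (sup S) = sup (fun c => exists s, S s /\ c = meet a s)
}.

Arguments le {L} : rename.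
Arguments sup {L} : rename.
Arguments meet {L} : rename.

Definition ltop (L : Locale) : L := sup (fun _ : L => True).

Definition lt {L : Locale} (a b : L) : Prop := le a b /\ a <> b.

Definition is_interval (L : Locale) : Prop :=
  (forall a b : L, le a b \/ le b a) /\
  (forall a b : L, lt a b -> exists s, lt a s /\ lt s b).

Record Presheaf (L : Locale) := {
  sec :> L -> Type;
  res : forall a b : L, le a b -> sec b -> sec a;
  res_id : forall a (h : le a a) x, res a a h x = x;
  res_comp : forall a b c (h1 : le a b) (h2 : le b c) (h3 : le a c) x,
    res a b h1 (res b c h2 x) = res a c h3 x
}.
Arguments res {L} p {a b} h x.
Arguments sec {L} p _.

Record PMap (L : Locale) (F G : Presheaf L) := {
  pmap :> forall a : L, F a -> G a;
  pmap_nat : forall (a b : L) (h : le a b) (x : F b),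
    pmap a (res F h x) = res G h (pmap b x)
}.
Arguments pmap {L F G} p a _.
Arguments PMap {L} F G.

(* Sheaf condition: for every covering sieve R of a (sieve on a with
   sup R = a), the canonical map F(a) -> lim_{b in R} F(b) is bijective;
   elements of the limit are compatible families (compared pointwise). *)
Definition is_sheaf {L : Locale} (F : Presheaf L) : Prop :=
  forall (a : L) (R : L -> Prop) (hR : forall b, R b -> le b a),
    (forall b c, R b -> le c b -> R c) ->
    sup R = a ->
    (forall s t : F a,
        (forall b (hb : R b), res F (hR b hb) s = res F (hR b hb) t) -> s = t) /\
    (forall fam : forall b, R b -> F b,
        (forall b c (hb : R b) (hc : R c) (h : le c b),
            res F h (fam b hb) = fam c hc) ->
        exists s : F a, forall b (hb : R b), res F (hR b hb) s = fam b hb).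

Definition is_sheafification {L : Locale} {F G : Presheaf L} (eta : PMap F G) : Prop :=
  is_sheaf G /\
  forall (H : Presheaf L) (phi : PMap F H), is_sheaf H ->
    exists psi : PMap G H,
      (forall a x, psi a (eta a x) = phi a x) /\
      (forall psi' : PMap G H, (forall a x, psi' a (eta a x) = phi a x) ->
         forall a y, psi' a y = psi a y).

Definition is_iso {L : Locale} {F G : Presheaf L} (f : PMap F G) : Prop :=
  exists g : PMap G F,
    (forall a x, g a (f a x) = x) /\ (forall a y, f a (g a y) = y).

(* Stalk F_x = colim_{x < s} F(s): germs (s, u) with x < s and u in F(s),
   modulo the equivalence relation generated by (s,u) ~ (r, u|_r). *)
Record Germ {L : Locale} (F : Presheaf L) (x : L) := mkGerm {
  g_s : L;
  g_lt : lt x g_s;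
  g_v : F g_s
}.
Arguments g_s {L F x} g.
Arguments g_lt {L F x} g.
Arguments g_v {L F x} g.
Arguments mkGerm {L F x} g_s g_lt g_v.

Definition germ_step {L : Locale} {F : Presheaf L} {x : L} (g1 g2 : Germ F x) : Prop :=
  exists h : le (g_s g2) (g_s g1), g_v g2 = res F h (g_v g1).

Definition germ_eq {L : Locale} {F : Presheaf L} {x : L} : Germ F x -> Germ F x -> Prop :=
  clos_refl_sym_trans (Germ F x) germ_step.

Definition germ_map {L : Locale} {E F : Presheaf L} (f : PMap E F) (x : L)
  (g : Germ E x) : Germ F x :=
  mkGerm (g_s g) (g_lt g) (f (g_s g) (g_v g)).

Definition stalk_bij {L : Locale} {E F : Presheaf L} (f : PMap E F) (x : L) : Prop :=
  (forall g1 g2 : Germ E x, germ_eq (germ_map f x g1) (germ_map f x g2) -> germ_eq g1 g2) /\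
  (forall h : Germ F x, exists g : Germ E x, germ_eq h (germ_map f x g)).

From Stdlib Require Import Relation_Operators Classical ClassicalEpsilon
  FunctionalExtensionality PropExtensionality ProofIrrelevance.

(* In an interval locale, [x < sup R] forces [x < b] for some [b] in [R]: the
   "points" [x+] (for [x < 1]) behave like points of a space, and the stalk
   [F_x] is the stalk at [x+].  Consequently the presheaf [a |-> (x < a -> Prop)]
   of truth values at [x+] is a sheaf, and the universal property of [eta]
   tested against it shows that [eta] is injective and surjective on the stalk
   at [x+]; this is (1).  For (2), by (1) the maps [E -> F] and [L^2E -> L^2F]
   are bijective on the same stalks, and a map of sheaves that is bijective on
   all stalks is an isomorphism: given [a], the [b <= a] on which two sections
   agree (resp. a section lifts) reach above every [c < a], hence cover [a]. *)

Lemma res_irrelevant {L : Locale} (F : Presheaf L) {a b : L} (h1 h2 : le a b) x :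
  res F h1 x = res F h2 x.
Proof. now rewrite (proof_irrelevance _ h1 h2). Qed.

Lemma lt_le_trans {L : Locale} {a b c : L} : lt a b -> le b c -> lt a c.
Proof.
  intros [hab nab] hbc; split; [exact (le_trans _ _ _ _ hab hbc) |].
  intros ->; apply nab, le_antisym; assumption.
Qed.

Lemma lt_ne_top {L : Locale} {c a : L} : lt c a -> c <> ltop L.
Proof.
  intros [hca nca] ->; apply nca, le_antisym; [exact hca |].
  apply sup_ub; exact I.
Qed.

Lemma mkGerm_eta {L : Locale} {F : Presheaf L} {x : L} (g : Germ F x) :
  mkGerm (g_s g) (g_lt g) (g_v g) = g.
Proof. now destruct g. Qed.

Lemma germ_eq_map {L : Locale} {E F : Presheaf L} (f : PMap E F) (x : L)
  (g1 g2 : Germ E x) :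
  germ_eq g1 g2 -> germ_eq (germ_map f x g1) (germ_map f x g2).
Proof.
  induction 1 as [g1 g2 [h e] | | | ].
  - apply rst_step; exists h; simpl; rewrite e; apply pmap_nat.
  - apply rst_refl.
  - now apply rst_sym.
  - eapply rst_trans; eassumption.
Qed.

Section IntervalLocale.

Context {L : Locale}.
Hypothesis HL : is_interval L.

Lemma le_of_not_lt (x b : L) : ~ lt x b -> le b x.
Proof.
  intro nxb; destruct (proj1 HL x b) as [hxb | hbx]; [| exact hbx].
  destruct (classic (x = b)) as [-> | ne]; [apply le_refl |].
  exfalso; apply nxb; split; assumption.
Qed.

Lemma lt_sup_elim (x : L) (R : L -> Prop) : lt x (sup R) -> exists b, R b /\ lt x b.
Proof.
  intros [hle hne]; apply NNPP; intro none.
  apply hne, le_antisym; [exact hle |].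
  apply sup_least; intros s Rs; apply le_of_not_lt; eauto.
Qed.

Lemma sup_eq_of_cofinal (R : L -> Prop) (a : L) :
  (forall b, R b -> le b a) -> (forall c, lt c a -> exists t, R t /\ lt c t) ->
  sup R = a.
Proof.
  intros below cofinal; apply le_antisym; [now apply sup_least |].
  apply le_of_not_lt; intro lt_sup_a.
  destruct (cofinal _ lt_sup_a) as [t [Rt [hle ne]]].
  apply ne, le_antisym; [exact hle | now apply sup_ub].
Qed.

Definition germ_agree {F : Presheaf L} {x : L} (g1 g2 : Germ F x) : Prop :=
  exists t (_ : lt x t) (h1 : le t (g_s g1)) (h2 : le t (g_s g2)),
    res F h1 (g_v g1) = res F h2 (g_v g2).

(* Totality lets two agreement witnesses be merged at the smaller one. *)
Lemma germ_eq_agree {F : Presheaf L} {x : L} (g1 g2 : Germ F x) :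
  germ_eq g1 g2 -> germ_agree g1 g2.
Proof.
  induction 1 as [[s1 l1 v1] [s2 l2 v2] [h e] | [s l v] | g1 g2 _ IH
                 | g1 g2 g3 _ [t [lxt [h1 [h2 e]]]] _ [t' [lxt' [h1' [h2' e']]]]];
    simpl in *.
  - exists s2, l2, h, (le_refl _ _); now rewrite e, res_id.
  - now exists s, l, (le_refl _ _), (le_refl _ _).
  - destruct IH as [t [lxt [h1 [h2 e]]]]; now exists t, lxt, h2, h1.
  - destruct (proj1 HL t t') as [k | k].
    + exists t, lxt, h1, (le_trans _ _ _ _ k h2').
      rewrite e, <- (res_comp L F t t' _ k h1' h2), e'; apply res_comp.
    + exists t', lxt', (le_trans _ _ _ _ k h1), h2'.
      rewrite <- e', <- (res_comp L F t' t _ k h1), e; apply res_comp.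
Qed.

(* Sections over [a] are truth values "at x+", defined only when [x < a]. *)
Definition skyscraper (x : L) : Presheaf L.
Proof.
  refine {| sec := fun a => lt x a -> Prop;
            res := fun a b h f p => f (lt_le_trans p h) |};
    intros; apply functional_extensionality; intro p; f_equal; apply proof_irrelevance.
Defined.

Lemma skyscraper_sheaf (x : L) : is_sheaf (skyscraper x).
Proof.
  intros a R hR _ Rsup; split.
  - intros s t Hst; apply functional_extensionality; intro p.
    assert (p' : lt x (sup R)) by (now rewrite Rsup).
    destruct (lt_sup_elim x R p') as [b [Rb xb]].
    pose proof (f_equal (fun f => f xb) (Hst b Rb)) as E; simpl in E.
    now rewrite (proof_irrelevance _ p (lt_le_trans xb (hR b Rb))).
  - intros fam Hfam.
    assert (pick : forall p : lt x a, {b : L | R b /\ lt x b}).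
    { intro p; apply constructive_indefinite_description, lt_sup_elim; now rewrite Rsup. }
    exists (fun p => let (b, Hb) := pick p in fam b (proj1 Hb) (proj2 Hb)).
    intros c Rc; apply functional_extensionality; intro q; simpl.
    destruct (pick _) as [b Hb]; destruct (proj1 HL b c) as [k | k].
    + rewrite <- (Hfam c b Rc (proj1 Hb) k); simpl; f_equal; apply proof_irrelevance.
    + rewrite <- (Hfam b c (proj1 Hb) Rc k); simpl; f_equal; apply proof_irrelevance.
Qed.

Definition germ_pred_map {F : Presheaf L} {x : L} (P : Germ F x -> Prop)
  (HP : forall g1 g2, germ_eq g1 g2 -> P g1 -> P g2) : PMap F (skyscraper x).
Proof.
  refine {| pmap := fun a u => (fun p => P (mkGerm a p u)) : skyscraper x a |}.
  intros a b h u; apply functional_extensionality; intro p; simpl.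
  apply propositional_extensionality; split; apply HP.
  - apply rst_sym, rst_step; now exists h.
  - apply rst_step; now exists h.
Defined.

Definition germ_value {G : Presheaf L} {x : L} (psi : PMap G (skyscraper x))
  (g : Germ G x) : Prop :=
  psi (g_s g) (g_v g) (g_lt g).

Lemma germ_value_eq {G : Presheaf L} {x : L} (psi : PMap G (skyscraper x))
  (g1 g2 : Germ G x) :
  germ_eq g1 g2 -> germ_value psi g1 = germ_value psi g2.
Proof.
  induction 1 as [g1 g2 [h e] | | | ]; try congruence.
  unfold germ_value; rewrite e, pmap_nat; simpl.
  f_equal; apply proof_irrelevance.
Qed.

Lemma sheafification_stalk_inj {F G : Presheaf L} (eta : PMap F G) (x : L) :
  is_sheafification eta -> forall g1 g2 : Germ F x,
  germ_eq (germ_map eta x g1) (germ_map eta x g2) -> germ_eq g1 g2.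
Proof.
  intros [_ Hext] g1 g2 H12.
  assert (HP : forall g g', germ_eq g g' -> germ_eq g1 g -> germ_eq g1 g')
    by (intros; eapply rst_trans; eassumption).
  destruct (Hext _ (germ_pred_map _ HP) (skyscraper_sheaf x)) as [psi [Hpsi _]].
  pose proof (germ_value_eq psi _ _ H12) as E.
  unfold germ_value in E; simpl in E; rewrite !Hpsi in E; simpl in E.
  rewrite !mkGerm_eta in E; rewrite <- E; apply rst_refl.
Qed.

(* Two extensions of the constant map [True]: the constant one, and the test
   "the germ is in the image of [eta]"; uniqueness identifies them. *)
Lemma sheafification_stalk_surj {F G : Presheaf L} (eta : PMap F G) (x : L) :
  is_sheafification eta -> forall h : Germ G x,
  exists g : Germ F x, germ_eq h (germ_map eta x g).
Proof.
  intros [_ Hext] h.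
  pose (const_true (H : Presheaf L) :=
          germ_pred_map (F := H) (x := x) (fun _ => True) (fun _ _ _ t => t)).
  destruct (Hext _ (const_true F) (skyscraper_sheaf x)) as [psi [_ Huniq]].
  assert (HP : forall g g', germ_eq g g' ->
            (exists e, germ_eq g (germ_map eta x e)) ->
            exists e, germ_eq g' (germ_map eta x e)).
  { intros g g' gg' [e ge]; exists e; eapply rst_trans; [apply rst_sym |]; eassumption. }
  assert (Himage := Huniq (germ_pred_map _ HP)).
  assert (Htrue := Huniq (const_true G)).
  assert (E : germ_pred_map _ HP (g_s h) (g_v h) = const_true G (g_s h) (g_v h)).
  { rewrite Himage, Htrue; [reflexivity | reflexivity |].
    intros a u; apply functional_extensionality; intro p; simpl.
    apply propositional_extensionality; split; [constructor |].
    intros _; exists (mkGerm a p u); apply rst_refl. }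
  pose proof (f_equal (fun f => f (g_lt h)) E) as Eh; simpl in Eh.
  rewrite mkGerm_eta in Eh; rewrite Eh; exact I.
Qed.

Lemma sheafification_stalk_bij {F G : Presheaf L} (eta : PMap F G) (x : L) :
  is_sheafification eta -> stalk_bij eta x.
Proof.
  intro Heta; split.
  - exact (sheafification_stalk_inj eta x Heta).
  - exact (sheafification_stalk_surj eta x Heta).
Qed.

Section SheafMap.

Context {GE GF : Presheaf L} (psi : PMap GE GF).
Hypothesis HE : is_sheaf GE.
Hypothesis HF : is_sheaf GF.
Hypothesis Hstalk : forall x, x <> ltop L -> stalk_bij psi x.

Lemma sheaf_map_inj (a : L) (u v : GE a) : psi a u = psi a v -> u = v.
Proof.
  intro Euv.
  pose (R b := le b a /\ forall h : le b a, res GE h u = res GE h v).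
  assert (Rdown : forall b c, R b -> le c b -> R c).
  { intros b c [hb e] k; split; [exact (le_trans _ _ _ _ k hb) |]; intro h.
    now rewrite <- !(res_comp L GE c b a k hb h), e. }
  assert (Rcover : sup R = a).
  { apply sup_eq_of_cofinal; [now intros b [] |]; intros c lt_ca.
    destruct (Hstalk c (lt_ne_top lt_ca)) as [Hinj _].
    assert (Hg : germ_eq (mkGerm a lt_ca u) (mkGerm a lt_ca v))
      by (apply Hinj; unfold germ_map; simpl; rewrite Euv; apply rst_refl).
    destruct (germ_eq_agree _ _ Hg) as [t [lt_ct [h1 [h2 e]]]]; simpl in *.
    exists t; split; [split; [exact h1 |] | exact lt_ct].
    intro h; rewrite (res_irrelevant _ h h1), e; apply res_irrelevant. }
  apply (proj1 (HE a R (fun b Rb => proj1 Rb) Rdown Rcover)).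
  intros b Rb; apply (proj2 Rb).
Qed.

Lemma sheaf_map_surj (a : L) (y : GF a) : exists w, psi a w = y.
Proof.
  pose (R b := exists w (h : le b a), psi b w = res GF h y).
  assert (hR : forall b, R b -> le b a) by (now intros b [w [h _]]).
  assert (Rdown : forall b c, R b -> le c b -> R c).
  { intros b c [w [h e]] k; exists (res GE k w), (le_trans _ _ _ _ k h).
    rewrite pmap_nat, e; apply res_comp. }
  assert (Rcover : sup R = a).
  { apply sup_eq_of_cofinal; [exact hR |]; intros c lt_ca.
    destruct (proj2 (Hstalk c (lt_ne_top lt_ca)) (mkGerm a lt_ca y)) as [g Hg].
    destruct (germ_eq_agree _ _ Hg) as [t [lt_ct [h1 [h2 e]]]]; simpl in *.
    exists t; split; [| exact lt_ct].
    exists (res GE h2 (g_v g)), h1; now rewrite pmap_nat. }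
  pose (lift b (Rb : R b) := proj1_sig (constructive_indefinite_description _ Rb)).
  assert (Hlift : forall b Rb, exists h : le b a, psi b (lift b Rb) = res GF h y)
    by (intros b Rb; exact (proj2_sig (constructive_indefinite_description _ Rb))).
  destruct (proj2 (HE a R hR Rdown Rcover) lift) as [w Hw].
  { intros b c Rb Rc k; apply sheaf_map_inj; rewrite pmap_nat.
    destruct (Hlift b Rb) as [hb ->], (Hlift c Rc) as [hc ->].
    apply res_comp. }
  exists w; apply (proj1 (HF a R hR Rdown Rcover)); intros b Rb.
  rewrite <- pmap_nat, Hw; destruct (Hlift b Rb) as [hb ->]; apply res_irrelevant.
Qed.

Lemma sheaf_map_iso : is_iso psi.
Proof.
  pose (inv a y := proj1_sig (constructive_indefinite_description _ (sheaf_map_surj a y))).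
  assert (Hinv : forall a y, psi a (inv a y) = y)
    by (intros a y; exact (proj2_sig (constructive_indefinite_description _ (sheaf_map_surj a y)))).
  assert (inv_nat : forall a b (h : le a b) y, inv a (res GF h y) = res GE h (inv b y))
    by (intros; apply sheaf_map_inj; now rewrite Hinv, pmap_nat, Hinv).
  exists {| pmap := inv; pmap_nat := inv_nat |}; split; simpl.
  - intros a u; apply sheaf_map_inj; now rewrite Hinv.
  - exact Hinv.
Qed.

End SheafMap.

End IntervalLocale.

Lemma iso_stalk_bij {L : Locale} {F G : Presheaf L} (f : PMap F G) (x : L) :
  is_iso f -> stalk_bij f x.
Proof.
  intros [g [gf fg]].
  assert (gfK : forall e, germ_map g x (germ_map f x e) = e)
    by (intros [s l v]; unfold germ_map; simpl; now rewrite gf).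
  assert (fgK : forall e, germ_map f x (germ_map g x e) = e)
    by (intros [s l v]; unfold germ_map; simpl; now rewrite fg).
  split.
  - intros e1 e2 H; rewrite <- (gfK e1), <- (gfK e2); now apply germ_eq_map.
  - intro e; exists (germ_map g x e); rewrite fgK; apply rst_refl.
Qed.

Lemma stalk_bij_square {L : Locale} {E F GE GF : Presheaf L} (phi : PMap E F)
  (etaE : PMap E GE) (etaF : PMap F GF) (psi : PMap GE GF) (x : L) :
  (forall a y, psi a (etaE a y) = etaF a (phi a y)) ->
  stalk_bij etaE x -> stalk_bij etaF x ->
  stalk_bij phi x <-> stalk_bij psi x.
Proof.
  intros Hsq [iE sE] [iF sF].
  assert (sq : forall g, germ_map psi x (germ_map etaE x g)
                         = germ_map etaF x (germ_map phi x g))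
    by (intros [s l v]; unfold germ_map; simpl; now rewrite Hsq).
  split; intros [i s]; split.
  - intros b1 b2 H.
    destruct (sE b1) as [a1 H1], (sE b2) as [a2 H2].
    eapply rst_trans; [exact H1 |]; eapply rst_trans; [| apply rst_sym; exact H2].
    apply germ_eq_map, i, iF; rewrite <- !sq.
    eapply rst_trans; [apply rst_sym, germ_eq_map, H1 |].
    eapply rst_trans; [exact H | apply germ_eq_map, H2].
  - intro h; destruct (sF h) as [f Hf], (s f) as [e He].
    exists (germ_map etaE x e); rewrite sq.
    eapply rst_trans; [exact Hf | apply germ_eq_map, He].
  - intros a1 a2 H; apply iE, i; rewrite !sq; now apply germ_eq_map.
  - intro f; destruct (s (germ_map etaF x f)) as [b Hb], (sE b) as [e He].
    exists e; apply iF; rewrite <- sq.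
    eapply rst_trans; [exact Hb | apply germ_eq_map, He].
Qed.

Theorem lemma34 (L : Locale) (HL : is_interval L) :
  (forall (F G : Presheaf L) (eta : PMap F G),
     is_sheafification eta ->
     forall x : L, x <> ltop L -> stalk_bij eta x) /\
  (forall (E F GE GF : Presheaf L) (phi : PMap E F)
          (etaE : PMap E GE) (etaF : PMap F GF) (psi : PMap GE GF),
     is_sheafification etaE -> is_sheafification etaF ->
     (forall a y, psi a (etaE a y) = etaF a (phi a y)) ->
     ((forall x : L, x <> ltop L -> stalk_bij phi x) <-> is_iso psi)).
Proof.
  split.
  { intros F G eta Heta x _; exact (sheafification_stalk_bij HL eta x Heta). }
  intros E F GE GF phi etaE etaF psi HE HF Hsq.
  assert (square : forall x, stalk_bij phi x <-> stalk_bij psi x)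
    by (intro x; apply (stalk_bij_square phi etaE etaF psi x Hsq);
        apply sheafification_stalk_bij; assumption).
  split.
  - intro Hphi; apply (sheaf_map_iso HL psi (proj1 HE) (proj1 HF)).
    intros x nx; apply square, Hphi, nx.
  - intros Hiso x _; apply square, iso_stalk_bij, Hiso.
Qed.
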